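(* For every $P$-point ultrafilter $U$ on $\omega$, the space $S_\omega$ is $U$-selective: for every lower semicontinuous $\varphi:Y_U\rightarrow\mathcal{F}(S_\omega)$ there is a continuous $s:Y_U\rightarrow S_\omega$ with $s(y)\in\varphi(y)$ for all $y\in Y_U$.
   Context: $\mathcal{F}(X)$ denotes the set of nonempty closed subsets of a space $X$; a map $\varphi:Y\rightarrow\mathcal{F}(X)$ is lower semicontinuous if for every open $W\subseteq X$ the set $\{y:\varphi(y)\cap W\neq\emptyset\}$ is open in $Y$. For a filter $F$ on $\omega$, $Y_F$ is the space on $\omega\cup\{\infty\}$ with points of $\omega$ isolated and neighborhoods of $\infty$ the sets $A\cup\{\infty\}$, $A\in F$. An ultrafilter $U$ on $\omega$ is a $P$-point if every function $\omega\rightarrow\omega$ is either constant or finite-to-one on some set in $U$. $S_\omega$ is the space on $(\omega\times\omega)\cup\{\infty\}$ in which points of $\omega\times\omega$ are isolated and a set containing $\infty$ is a neighborhood of $\infty$ iff it contains all but finitely many points of each spine $\{m\}\times\omega$; equivalently, a neighborhood base at $\infty$ is given by the sets $W_f=\{\infty\}\cup\{(m,n):n>f(m)\}$ for $f\in{}^\omega\omega$. *)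

From Stdlib Require Import Arith.

Definition is_filter (F : (nat -> Prop) -> Prop) : Prop :=
  F (fun _ => True) /\
  ~ F (fun _ => False) /\
  (forall A B : nat -> Prop, F A -> (forall n, A n -> B n) -> F B) /\
  (forall A B : nat -> Prop, F A -> F B -> F (fun n => A n /\ B n)).

Definition is_ultrafilter (U : (nat -> Prop) -> Prop) : Prop :=
  is_filter U /\ forall A : nat -> Prop, U A \/ U (fun n => ~ A n).

Definition is_P_point (U : (nat -> Prop) -> Prop) : Prop :=
  is_ultrafilter U /\
  forall f : nat -> nat, exists A : nat -> Prop, U A /\
    ((exists c, forall n, A n -> f n = c) \/
     (forall k, exists N, forall n, A n -> f n = k -> n < N)).

(* carrier: option nat, None = ∞, Some n = n ∈ omega (isolated). *)
Definition Y_open (F : (nat -> Prop) -> Prop) (W : option nat -> Prop) : Prop :=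
  W None -> F (fun n => W (Some n)).

(* carrier: option (nat*nat), None = ∞.  A set containing ∞ is a
   neighbourhood of ∞ iff it contains all but finitely many points of each
   spine {m} x omega. *)
Definition S_open (W : option (nat * nat) -> Prop) : Prop :=
  W None -> forall m : nat, exists k : nat, forall n : nat, k < n -> W (Some (m, n)).

Definition S_closed (C : option (nat * nat) -> Prop) : Prop :=
  S_open (fun x => ~ C x).

Definition in_FS (C : option (nat * nat) -> Prop) : Prop :=
  (exists x, C x) /\ S_closed C.

Definition lsc (U : (nat -> Prop) -> Prop)
    (phi : option nat -> option (nat * nat) -> Prop) : Prop :=
  forall W : option (nat * nat) -> Prop, S_open W ->
    Y_open U (fun y => exists x, phi y x /\ W x).

Definition continuous_YS (U : (nat -> Prop) -> Prop)
    (s : option nat -> option (nat * nat)) : Prop :=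
  forall W : option (nat * nat) -> Prop, S_open W -> Y_open U (fun y => W (s y)).

From Stdlib Require Import Arith Lia Classical ClassicalEpsilon.

(* Continuity of a selection s matters only at the point at infinity of Y_U,
   where it says that s(n) converges to s(infinity) along U.  Pick x in
   phi(infinity); lower semicontinuity says that phi(n) meets each
   neighbourhood of x for U-many n.  If x is isolated, or if infinity lies in
   phi(n) for U-many n, select x itself on a set in U.  Otherwise phi(n) is
   closed and misses infinity for U-many n, hence is finite on every spine,
   and we select the highest point of phi(n) on a spine r(n).  If for some
   spine m the sets phi(n) reach arbitrarily high on m for U-many n, take
   r(n) = m.  If not, each spine m is avoided above some level N(m) by U-many
   phi(n), and r(n) is the first spine on which phi(n) rises above N(m).  This
   r cannot be constant on a set in U, so the P-point property makes it
   finite-to-one on some A in U.  Given a basic neighbourhood W_f of infinity,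
   only finitely many n in A have r(n) < m, and their phi(n) are bounded on
   spine m; raising f accordingly to g, every n in A whose phi(n) meets W_g has
   its selected point in W_f. *)

Section Filters.

Variable U : (nat -> Prop) -> Prop.
Hypothesis U_filter : is_filter U.

Lemma filter_mono (A B : nat -> Prop) : U A -> (forall n, A n -> B n) -> U B.
Proof. destruct U_filter as (_ & _ & mono & _); exact (mono A B). Qed.

Lemma filter_and (A B : nat -> Prop) : U A -> U B -> U (fun n => A n /\ B n).
Proof. destruct U_filter as (_ & _ & _ & meet); exact (meet A B). Qed.

Lemma filter_nonempty (A : nat -> Prop) : U A -> exists n, A n.
Proof.
  intro HA; apply NNPP; intro Hempty.
  destruct U_filter as (_ & Hproper & _); apply Hproper.
  apply (filter_mono A); [exact HA | intros n An; apply Hempty; now exists n].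
Qed.

End Filters.

Lemma partial_choice {A B : Type} (b : B) (Q : A -> Prop) (R : A -> B -> Prop) :
  (forall a, Q a -> exists y, R a y) -> exists f : A -> B, forall a, Q a -> R a (f a).
Proof.
  intro H; apply (choice (fun a y => Q a -> R a y)); intro a.
  destruct (classic (Q a)) as [Qa | nQa].
  - destruct (H a Qa) as [y Hy]; now exists y.
  - now exists b.
Qed.

Lemma exists_least (P : nat -> Prop) :
  (exists n, P n) -> exists n, P n /\ forall m, m < n -> ~ P m.
Proof.
  intro Hex.
  destruct (dec_inh_nat_subset_has_unique_least_element P (fun n => classic (P n)) Hex)
    as (n & (Pn & Hle) & _).
  exists n; split; [exact Pn |].
  intros m Hmn Pm; specialize (Hle m Pm); lia.
Qed.

Lemma exists_greatest (P : nat -> Prop) (k : nat) :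
  (forall j, k < j -> ~ P j) -> (exists j, P j) -> exists j, P j /\ forall i, P i -> i <= j.
Proof.
  induction k as [| k IH]; intros Hk [j Pj].
  - exists 0; split.
    + destruct j; [exact Pj | now apply Hk in Pj; lia].
    + intros i Pi; destruct i; [lia | now apply Hk in Pi; lia].
  - destruct (classic (P (S k))) as [PSk | nPSk].
    + exists (S k); split; [exact PSk |].
      intros i Pi; destruct (Nat.le_gt_cases i (S k)); [lia | now apply Hk in Pi].
    + apply IH; [| now exists j].
      intros i Hi Pi; destruct (Nat.eq_dec i (S k)) as [-> | ne]; [easy |].
      apply (Hk i); [lia | exact Pi].
Qed.

Lemma finite_to_one_bounded (A : nat -> Prop) (r : nat -> nat) :
  (forall k, exists N, forall n, A n -> r n = k -> n < N) ->
  forall m, exists N, forall n, A n -> r n < m -> n < N.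
Proof.
  intros Hfib m; induction m as [| m [N HN]].
  - exists 0; lia.
  - destruct (Hfib m) as [Nm HNm]; exists (N + Nm); intros n An Hrn.
    destruct (Nat.eq_dec (r n) m) as [Heq | Hne].
    + specialize (HNm n An Heq); lia.
    + assert (r n < m) as Hlt by lia; specialize (HN n An Hlt); lia.
Qed.

Definition basic_nbhd (f : nat -> nat) (x : option (nat * nat)) : Prop :=
  match x with None => True | Some (m, j) => f m < j end.

Lemma basic_nbhd_open (f : nat -> nat) : S_open (basic_nbhd f).
Proof. intros _ m; exists (f m); intros j Hj; exact Hj. Qed.

Lemma open_contains_basic_nbhd (W : option (nat * nat) -> Prop) :
  S_open W -> W None -> exists f, forall x, basic_nbhd f x -> W x.
Proof.
  intros HW Winf; destruct (choice _ (HW Winf)) as [f Hf].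
  exists f; intros [[m j] |] Hx; [exact (Hf m j Hx) | exact Winf].
Qed.

Lemma closed_spine_has_top (C : option (nat * nat) -> Prop) (m j : nat) :
  S_closed C -> ~ C None -> C (Some (m, j)) ->
  exists js, C (Some (m, js)) /\ forall i, C (Some (m, i)) -> i <= js.
Proof.
  intros Hclosed Hinf Hj; destruct (Hclosed Hinf m) as [k Hk].
  apply (exists_greatest _ k); [| now exists j].
  intros i Hi Ci; exact (Hk i Hi Ci).
Qed.

Definition converges (U : (nat -> Prop) -> Prop) (s : nat -> option (nat * nat))
    (x : option (nat * nat)) : Prop :=
  forall W, S_open W -> W x -> U (fun n => W (s n)).

Definition lower_limit (U : (nat -> Prop) -> Prop)
    (psi : nat -> option (nat * nat) -> Prop) (x : option (nat * nat)) : Prop :=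
  forall W, S_open W -> W x -> U (fun n => exists y, psi n y /\ W y).

Lemma lsc_lower_limit (U : (nat -> Prop) -> Prop) phi x :
  lsc U phi -> phi None x -> lower_limit U (fun n => phi (Some n)) x.
Proof. intros Hlsc Hx W HW Wx; apply (Hlsc W HW); now exists x. Qed.

Lemma converges_continuous (U : (nat -> Prop) -> Prop) s x :
  converges U s x ->
  continuous_YS U (fun y => match y with None => x | Some n => s n end).
Proof. intros Hs W HW Wx; exact (Hs W HW Wx). Qed.

Section Selection.

Variable U : (nat -> Prop) -> Prop.
Hypothesis U_filter : is_filter U.
Hypothesis U_ultra : forall A : nat -> Prop, U A \/ U (fun n => ~ A n).
Hypothesis U_P_point : forall f : nat -> nat, exists A : nat -> Prop, U A /\
  ((exists c, forall n, A n -> f n = c) \/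
   (forall k, exists N, forall n, A n -> f n = k -> n < N)).

Variable psi : nat -> option (nat * nat) -> Prop.
Hypothesis psi_nonempty : forall n, exists x, psi n x.
Hypothesis psi_closed : forall n, S_closed (psi n).

Lemma converges_to_infinity (s : nat -> option (nat * nat)) :
  (forall f, U (fun n => basic_nbhd f (s n))) -> converges U s None.
Proof.
  intros Hs W HW Winf; destruct (open_contains_basic_nbhd W HW Winf) as [f Hf].
  apply (filter_mono U U_filter _ _ (Hs f)); intros n; apply Hf.
Qed.

Lemma preferred_selection (Q : nat -> Prop) (R : nat -> option (nat * nat) -> Prop) :
  (forall n, Q n -> exists x, psi n x /\ R n x) ->
  exists s, forall n, psi n (s n) /\ (Q n -> R n (s n)).
Proof.
  intro Hpref; apply (choice (fun n x => psi n x /\ (Q n -> R n x))); intro n.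
  destruct (classic (Q n)) as [Qn | nQn].
  - destruct (Hpref n Qn) as [x Hx]; exists x; tauto.
  - destruct (psi_nonempty n) as [x Hx]; exists x; tauto.
Qed.

Lemma selection_through_frequent_point (x : option (nat * nat)) :
  U (fun n => psi n x) -> exists s, (forall n, psi n (s n)) /\ converges U s x.
Proof.
  intro Hx.
  destruct (preferred_selection (fun n => psi n x) (fun _ y => y = x)) as [s Hs].
  { intros n Hn; now exists x. }
  exists s; split; [intro n; apply Hs |].
  intros W _ Wx; apply (filter_mono U U_filter _ _ Hx).
  intros n Hn; destruct (Hs n) as [_ ->]; easy.
Qed.

Lemma spine_top_selection (r : nat -> nat) :
  exists s, forall n, psi n (s n) /\
    (~ psi n None -> (exists j, psi n (Some (r n, j))) ->
     exists js, s n = Some (r n, js) /\ forall j, psi n (Some (r n, j)) -> j <= js).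
Proof.
  destruct (preferred_selection
              (fun n => ~ psi n None /\ exists j, psi n (Some (r n, j)))
              (fun n y => exists js, y = Some (r n, js) /\
                                     forall j, psi n (Some (r n, j)) -> j <= js))
    as [s Hs].
  - intros n [Hinf [j Hj]].
    destruct (closed_spine_has_top (psi n) (r n) j (psi_closed n) Hinf Hj) as (js & Hjs & Htop).
    exists (Some (r n, js)); split; [exact Hjs |]; now exists js.
  - exists s; intro n; destruct (Hs n) as [Hsel Htop]; split; [exact Hsel |].
    intros Hinf Hj; exact (Htop (conj Hinf Hj)).
Qed.

Definition spine_reached_high (m : nat) : Prop :=
  forall N, U (fun n => exists j, N < j /\ psi n (Some (m, j))).

Lemma spine_avoided_of_not_reached_high (m : nat) :
  ~ spine_reached_high m ->
  exists N, U (fun n => forall j, N < j -> ~ psi n (Some (m, j))).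
Proof.
  intro Hnot; apply not_all_ex_not in Hnot as [N HN]; exists N.
  destruct (U_ultra (fun n => exists j, N < j /\ psi n (Some (m, j)))) as [H | H];
    [contradiction |].
  apply (filter_mono U U_filter _ _ H); intros n Hn j Hj Hp; apply Hn; now exists j.
Qed.

Section AvoidingInfinity.

Hypothesis psi_avoids_infinity : U (fun n => ~ psi n None).

Lemma selection_on_high_spine (m0 : nat) :
  spine_reached_high m0 -> exists s, (forall n, psi n (s n)) /\ converges U s None.
Proof.
  intro Hhigh; destruct (spine_top_selection (fun _ => m0)) as [s Hs].
  exists s; split; [intro n; apply Hs |].
  apply converges_to_infinity; intro f.
  apply (filter_mono U U_filter _ _ (filter_and U U_filter _ _ (Hhigh (f m0)) psi_avoids_infinity)).
  intros n [[j [Hj Hpsi]] Hinf].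
  destruct (Hs n) as [_ Htop]; destruct (Htop Hinf (ex_intro _ j Hpsi)) as (js & -> & Hle).
  specialize (Hle j Hpsi); simpl; lia.
Qed.

Section AvoidedSpines.

Variable level : nat -> nat.
Hypothesis spine_avoided : forall m, U (fun n => forall j, level m < j -> ~ psi n (Some (m, j))).
Hypothesis psi_lower_limit : lower_limit U psi None.

Definition rises_on (n m : nat) : Prop := exists j, level m < j /\ psi n (Some (m, j)).

Lemma rises_somewhere_often : U (fun n => ~ psi n None /\ exists m, rises_on n m).
Proof.
  pose proof (psi_lower_limit _ (basic_nbhd_open level) I) as Hmeet.
  apply (filter_mono U U_filter _ _ (filter_and U U_filter _ _ Hmeet psi_avoids_infinity)).
  intros n [([[m j] |] & Hpsi & Hj) Hinf]; [| contradiction].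
  split; [exact Hinf |]; now exists m, j.
Qed.

Lemma exists_first_rising_spine :
  exists r, forall n, (exists m, rises_on n m) ->
    rises_on n (r n) /\ forall m, m < r n -> ~ rises_on n m.
Proof.
  apply (partial_choice 0 (fun n => exists m, rises_on n m)
           (fun n k => rises_on n k /\ forall m, m < k -> ~ rises_on n m)).
  intros n; apply exists_least.
Qed.

Variable r : nat -> nat.
Hypothesis r_first : forall n, (exists m, rises_on n m) ->
  rises_on n (r n) /\ forall m, m < r n -> ~ rises_on n m.

Lemma first_rising_spine_finite_to_one :
  exists A, U A /\ forall k, exists N, forall n, A n -> r n = k -> n < N.
Proof.
  destruct (U_P_point r) as (A & HA & [[c Hc] | Hfin]); [exfalso | now exists A].
  pose proof (filter_and U U_filter _ _ (filter_and U U_filter _ _ HA rises_somewhere_often)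
                (spine_avoided c)) as Hbad.
  destruct (filter_nonempty U U_filter _ Hbad) as (n & (An & _ & Hrise) & Havoid).
  destruct (r_first n Hrise) as [[j [Hj Hpsi]] _]; rewrite (Hc n An) in Hj, Hpsi.
  exact (Havoid j Hj Hpsi).
Qed.

Lemma initial_segment_spine_bound (m B : nat) :
  exists K, forall i j, i < B -> ~ psi i None -> K < j -> ~ psi i (Some (m, j)).
Proof.
  induction B as [| B [K HK]]; [exists 0; lia |].
  destruct (classic (psi B None)) as [HB | HB].
  - exists K; intros i j Hi Hinf Hj.
    destruct (Nat.eq_dec i B) as [-> | Hne]; [contradiction |].
    apply (HK i j); [lia | exact Hinf | exact Hj].
  - destruct (psi_closed B HB m) as [KB HKB]; exists (K + KB); intros i j Hi Hinf Hj.
    destruct (Nat.eq_dec i B) as [-> | Hne]; [apply HKB; lia |].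
    apply (HK i j); [lia | exact Hinf | lia].
Qed.

Lemma selection_on_first_rising_spine :
  exists s, (forall n, psi n (s n)) /\ converges U s None.
Proof.
  destruct first_rising_spine_finite_to_one as (A & HA & Hfin).
  destruct (choice _ (finite_to_one_bounded A r Hfin)) as [bound Hbound].
  destruct (choice _ (fun m => initial_segment_spine_bound m (bound m))) as [K HK].
  destruct (spine_top_selection r) as [s Hs].
  exists s; split; [intro n; apply Hs |].
  apply converges_to_infinity; intro f.
  pose (g m := level m + f m + K m).
  pose proof (psi_lower_limit _ (basic_nbhd_open g) I) as Hmeet.
  apply (filter_mono U U_filter _ _
           (filter_and U U_filter _ _ (filter_and U U_filter _ _ Hmeet HA) rises_somewhere_often)).
  intros n [[([[m j] |] & Hpsi & Hj) An] [Hinf Hrise]]; [| contradiction].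
  simpl in Hj; unfold g in Hj.
  destruct (r_first n Hrise) as [Hrn Hfirst].
  destruct (Hs n) as [_ Htop]; destruct Htop as (js & -> & Hle);
    [exact Hinf | destruct Hrn as [j' [_ Hj']]; now exists j' |].
  destruct (lt_eq_lt_dec m (r n)) as [[Hlt | ->] | Hgt].
  - exfalso; apply (Hfirst m Hlt); exists j; split; [lia | exact Hpsi].
  - specialize (Hle j Hpsi); simpl; lia.
  - exfalso; apply (HK m n j); [exact (Hbound m n An Hgt) | exact Hinf | lia | exact Hpsi].
Qed.

End AvoidedSpines.

End AvoidingInfinity.

Lemma selection_converging_to_lower_limit (x : option (nat * nat)) :
  lower_limit U psi x -> exists s, (forall n, psi n (s n)) /\ converges U s x.
Proof.
  intro Hlim; destruct x as [p |].
  - apply selection_through_frequent_point.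
    assert (S_open (fun y => y = Some p)) as Hopen by (intro H; discriminate H).
    apply (filter_mono U U_filter _ _ (Hlim _ Hopen eq_refl)).
    intros n (y & Hy & ->); exact Hy.
  - destruct (U_ultra (fun n => psi n None)) as [Hinf | Havoid];
      [now apply selection_through_frequent_point |].
    destruct (classic (exists m, spine_reached_high m)) as [[m Hm] | Hnone];
      [exact (selection_on_high_spine Havoid m Hm) |].
    destruct (choice _ (fun m => spine_avoided_of_not_reached_high m
                                    (fun Hm => Hnone (ex_intro _ m Hm)))) as [level Hlevel].
    destruct (exists_first_rising_spine level) as [r Hr].
    exact (selection_on_first_rising_spine Havoid level Hlevel Hlim r Hr).
Qed.

End Selection.

Theorem mainTheorem2 :
  forall U : (nat -> Prop) -> Prop, is_P_point U ->
  forall phi : option nat -> option (nat * nat) -> Prop,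
    (forall y, in_FS (phi y)) -> lsc U phi ->
    exists s : option nat -> option (nat * nat),
      continuous_YS U s /\ forall y, phi y (s y).
Proof.
  intros U [[U_filter U_ultra] U_P_point] phi Hphi Hlsc.
  destruct (proj1 (Hphi None)) as [x Hx].
  destruct (selection_converging_to_lower_limit U U_filter U_ultra U_P_point
              (fun n => phi (Some n)) (fun n => proj1 (Hphi (Some n)))
              (fun n => proj2 (Hphi (Some n))) x (lsc_lower_limit U phi x Hlsc Hx))
    as (s & Hsel & Hconv).
  exists (fun y => match y with None => x | Some n => s n end); split.
  - exact (converges_continuous U s x Hconv).
  - intros [n |]; [exact (Hsel n) | exact Hx].
Qed.
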